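(* Let $\delta:C_+\oplus C_-\to C_+\oplus C_-$, $C_\pm=\mathbb{Z}_D^n$, be a good boundary operator (with respect to $n'\le n$). Let $\mathcal{V}\le C$ be spanned by the first $n'$ standard basis vectors of $C_+$ and the first $n'$ standard basis vectors of $C_-$, and $\mathcal{V}^>$ by the remaining standard basis vectors; let $W$ be the projection onto $\mathcal{V}$ along $\mathcal{V}^>$, $S^>=W\delta(\mathcal{V}^>)$, $\mathcal{V}'=\mathcal{V}/S^>$, $\varphi(h)=Wh+S^>$, and $\delta'$, $P'$ the induced maps on $\mathcal{V}'$ given by $\delta'(x+S^>)=\varphi(\delta x)$, $P'(x+S^>)=\varphi(Px)$. Write $\mathcal{V}'_\pm$ for the $\pm1$ eigenspaces of $P'$ and $\delta'_{-+}:\mathcal{V}'_+\to\mathcal{V}'_-$, $\delta'_{+-}:\mathcal{V}'_-\to\mathcal{V}'_+$ for the components of $\delta'$ (and similarly $\delta_{-+}:C_+\to C_-$, $\delta_{+-}:C_-\to C_+$). Then $\dim\mathcal{V}'_\pm=2n'-n$ and $\dim\ker\delta'_{-+}=\dim\ker\delta_{-+}-(n-n')$, $\dim\operatorname{im}\delta'_{-+}=\dim\operatorname{im}\delta_{-+}-(n-n')$, and similarly $\dim\ker\delta'_{+-}=\dim\ker\delta_{+-}-(n-n')$, $\dim\operatorname{im}\delta'_{+-}=\dim\operatorname{im}\delta_{+-}-(n-n')$.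
   Context: $D$ is an odd prime, $\mathbb{Z}_D$ the field with $D$ elements. $C=C_+\oplus C_-$ with $C_\pm=\mathbb{Z}_D^n$ and $P=\begin{bmatrix}I_n&0\\0&-I_n\end{bmatrix}$. A boundary operator is a linear map $\delta:C\to C$ with $\delta^2=0$ and $\delta P+P\delta=0$ (so $\delta=\begin{bmatrix}0&\delta_{+-}\\ \delta_{-+}&0\end{bmatrix}$). Fix $n'\le n$. Such a $\delta$ is called good if neither $\ker\delta\cap C_+$ nor $\ker\delta\cap C_-$ contains a nonzero vector supported on the last $n-n'$ coordinates (of $C_+$, resp. $C_-$). *)

From HB Require Import structures.
From mathcomp Require Import all_boot all_order all_algebra.
Set Implicit Arguments. Unset Strict Implicit. Unset Printing Implicit Defensive.
Import GRing.Theory.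
Local Open Scope ring_scope.

(* Conventions: C = C_+ (+) C_- is 'rV[F]_(n + n); coordinates i < n are C_+,
   coordinates n <= i < n + n are C_-.  Linear maps act on row vectors on the
   right: the image of x under a map with matrix M is x *m M. *)

Section Defs.
Variable F : fieldType.

Definition parP (n : nat) : 'M[F]_(n + n) := block_mx 1%:M 0 0 (- 1%:M).

Definition is_boundary (n : nat) (d : 'M[F]_(n + n)) : Prop :=
  d *m d = 0 /\ d *m parP n + parP n *m d = 0.

(* components: delta_{-+} : C_+ -> C_- and delta_{+-} : C_- -> C_+ *)
Definition dmp (n : nat) (d : 'M[F]_(n + n)) : 'M[F]_(n, n) := ursubmx d.
Definition dpm (n : nat) (d : 'M[F]_(n + n)) : 'M[F]_(n, n) := dlsubmx d.

Definition good (n n' : nat) (d : 'M[F]_(n + n)) : Prop :=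
  (forall x : 'rV[F]_(n + n), x *m d = 0 ->
     (forall i : 'I_(n + n), x 0 i != 0 -> (n' <= i < n)%N) -> x = 0) /\
  (forall x : 'rV[F]_(n + n), x *m d = 0 ->
     (forall i : 'I_(n + n), x 0 i != 0 -> (n + n' <= i)%N) -> x = 0).

Definition inV (n n' : nat) (i : 'I_(n + n)) : bool :=
  (i < n')%N || ((n <= i)%N && (i < n + n')%N).

(* W = projection onto calV along calV^> ; its row space is calV *)
Definition Wproj (n n' : nat) : 'M[F]_(n + n) :=
  diag_mx (\row_i (inV n' i)%:R).

(* row space of (1 - W) is calV^> *)
Definition Vgt (n n' : nat) : 'M[F]_(n + n) := 1%:M - Wproj n n'.

Definition Sgt (n n' : nat) (d : 'M[F]_(n + n)) : 'M[F]_(n + n) :=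
  Vgt n n' *m d *m Wproj n n'.

(* A presentation of the quotient calV' = calV / S^> : a linear map
   q : C -> F^k whose kernel on calV is exactly S^>; the coset x + S^>
   (x in calV) is represented by x *m q, and calV' is the row space of
   Wproj *m q.  phi(h) = W h + S^> is h |-> h *m W *m q. *)
Definition quot_pres (n n' k : nat) (d : 'M[F]_(n + n)) (q : 'M[F]_(n + n, k))
  : bool := (Wproj n n' :&: kermx q == Sgt n' d)%MS.

Definition dprime (n n' k : nat) (d : 'M[F]_(n + n)) (q : 'M[F]_(n + n, k)) :=
  d *m Wproj n n' *m q.
Definition Pprime (n n' k : nat) (q : 'M[F]_(n + n, k)) :=
  parP n *m Wproj n n' *m q.

(* representatives x in calV of the +1 / -1 eigenvectors of P' *)
Definition pre_eig (n n' k : nat) (s : F) (q : 'M[F]_(n + n, k)) : 'M[F]_(n + n) :=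
  (Wproj n n' :&: kermx (Pprime n' q - s *: (Wproj n n' *m q)))%MS.

Definition Vq (n n' k : nat) (s : F) (q : 'M[F]_(n + n, k)) : 'M[F]_(n + n, k) :=
  pre_eig n' s q *m q.

Definition kerq (n n' k : nat) (s : F) (d : 'M[F]_(n + n)) (q : 'M[F]_(n + n, k))
  : 'M[F]_(n + n, k) :=
  (pre_eig n' s q :&: kermx (dprime n' d q))%MS *m q.

Definition imq (n n' k : nat) (s : F) (d : 'M[F]_(n + n)) (q : 'M[F]_(n + n, k))
  : 'M[F]_(n + n, k) :=
  pre_eig n' s q *m dprime n' d q.

End Defs.

From HB Require Import structures.
From mathcomp Require Import all_boot all_order all_algebra.
From mathcomp Require Import zify ring.

(* Write P_+ and P_- for the projections onto C_+ and C_-, and U = 1 - W.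
   The +1 eigenspace of P' lifts to E = W P_+ + S^> inside calV, and
   W P_+ meets S^> in S^> P_+ = U P_- delta W.  Goodness makes delta W
   injective on U P_+ and U P_-, and W injective on the image of P_+ delta, so
   dim calV'_+ = dim W P_+ - dim U P_- = n' - (n - n'), and delta' maps calV'_+
   onto the image of P_+ delta W modulo S^>, whose dimension is
   rank delta_{-+} - dim U P_+.
   Since delta' vanishes on S^>, rank-nullity gives the kernel.  Exchanging
   P_+ and P_- gives the statements for calV'_-. *)

Set Implicit Arguments.
Unset Strict Implicit.
Unset Printing Implicit Defensive.
Import GRing.Theory.
Local Open Scope ring_scope.

Lemma mxrank_mul_inj (F : fieldType) m n p (A : 'M[F]_(m, n)) (B : 'M_(n, p)) :
  (forall u : 'rV_n, (u <= A)%MS -> u *m B = 0 -> u = 0) ->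
  \rank (A *m B) = \rank A.
Proof.
move=> injB; apply/mxrank_injP/rowV0P => u.
by rewrite sub_capmx => /andP[uA /sub_kermxP]; exact: injB.
Qed.

Lemma kermxZ (F : fieldType) m n (c : F) (A : 'M[F]_(m, n)) :
  c != 0 -> (kermx (c *: A) :=: kermx A)%MS.
Proof.
move=> c0; apply/eqmxP/andP; split; apply/sub_kermxP.
- have /eqP := mulmx_ker (c *: A).
  by rewrite -scalemxAr scalemx_eq0 (negPf c0) => /eqP.
- by rewrite -scalemxAr mulmx_ker scaler0.
Qed.

Lemma mulmx_idem_sub (F : fieldType) m n (X : 'M[F]_n) (A : 'M[F]_(m, n)) :
  X *m X = X -> (A <= X)%MS -> A *m X = A.
Proof. by move=> XX /submxP[B ->]; rewrite -mulmxA XX. Qed.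

Section QuotientRanks.
Variables (F : fieldType) (N k : nat) (W d : 'M[F]_N) (q : 'M[F]_(N, k)).
Let U := 1%:M - W.
Let S := U *m d *m W.
Let M := d *m W *m q.

Hypotheses (W_idem : W *m W = W) (dd0 : d *m d = 0) (quot : (W :&: kermx q == S)%MS).

Definition ker_faithful (P : 'M[F]_N) :=
  forall x : 'rV_N, x *m d = 0 -> x *m P = x -> x *m W = 0 -> x = 0.

Lemma complW_W : U *m W = 0.
Proof. by rewrite /U mulmxBl mul1mx W_idem subrr. Qed.

Lemma complW_comm (P : 'M[F]_N) : W *m P = P *m W -> U *m P = P *m U.
Proof. by move=> WP; rewrite /U mulmxBl mulmxBr mul1mx mulmx1 WP. Qed.

Lemma rank_complW_dW (P Q : 'M[F]_N) :
  Q *m Q = Q -> W *m Q = Q *m W -> d *m P = Q *m d ->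
  ker_faithful P -> ker_faithful Q ->
  \rank (U *m Q *m d *m W) = \rank (U *m Q).
Proof.
move=> Q_idem WQ dP goodP goodQ.
rewrite -mulmxA; apply: mxrank_mul_inj => _ /submxP[B ->].
set u := B *m (U *m Q) => udW0.
have uQ : u *m Q = u by rewrite /u -!mulmxA Q_idem.
have ud0 : u *m d = 0.
  apply: goodP; last by rewrite -mulmxA.
  - by rewrite -mulmxA dd0 mulmx0.
  - by rewrite -mulmxA dP mulmxA uQ.
apply: goodQ => //.
by rewrite /u -!mulmxA -WQ (mulmxA U) complW_W mul0mx mulmx0.
Qed.

Lemma rank_dW (P Q : 'M[F]_N) :
  P *m P = P -> d *m Q = P *m d -> ker_faithful Q ->
  \rank (P *m d *m W) = \rank (P *m d).
Proof.
move=> P_idem dQ goodQ; apply: mxrank_mul_inj => _ /submxP[B ->] uW0.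
apply: goodQ => //; first by rewrite -!mulmxA dd0 !mulmx0.
by rewrite -!mulmxA dQ (mulmxA P) P_idem.
Qed.

Lemma Sgt_le_W : (S <= W)%MS.
Proof. exact: submxMl. Qed.

Lemma Wq_le_Sgt : (W :&: kermx q <= S)%MS.
Proof. by case/andP: quot. Qed.

Lemma Sgt_q : S *m q = 0.
Proof. by apply/sub_kermxP; apply: submx_trans (capmxSr W _); case/andP: quot. Qed.

Lemma Sgt_dq : S *m M = 0.
Proof.
have Wd : W *m d = d - U *m d by rewrite /U mulmxBl mul1mx opprB addrC subrK.
have SdW : S *m d *m W = - (U *m d *m S).
  rewrite /S -(mulmxA (U *m d)) Wd mulmxBr mulmxBl -(mulmxA U d d) dd0.
  by rewrite mulmx0 mul0mx sub0r !mulmxA.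
by rewrite /M !mulmxA SdW mulNmx -(mulmxA _ S) Sgt_q mulmx0 oppr0.
Qed.

Section Eigen.
Variables Pi Pj : 'M[F]_N.
Hypotheses (PiPj : Pi + Pj = 1%:M) (Pi_idem : Pi *m Pi = Pi) (Pj_idem : Pj *m Pj = Pj)
  (WPi : W *m Pi = Pi *m W) (WPj : W *m Pj = Pj *m W)
  (dPi : d *m Pi = Pj *m d) (dPj : d *m Pj = Pi *m d)
  (good_i : ker_faithful Pi) (good_j : ker_faithful Pj).

(* For Pi = P_+, E represents the eigenspace calV'_+: for x in calV the
   condition P'(x + S^>) = x + S^> reads P_- x in S^>, i.e. P_- W x in ker q. *)
Let E := (W :&: kermx (Pj *m W *m q))%MS.

Lemma Pi_Pj : Pi *m Pj = 0.
Proof.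
have -> : Pj = 1%:M - Pi by rewrite -PiPj addrC addKr.
by rewrite mulmxBr mulmx1 Pi_idem subrr.
Qed.

Lemma Sgt_Pi : S *m Pi = Pj *m S.
Proof.
by rewrite /S -mulmxA WPi mulmxA -(mulmxA U) dPi mulmxA complW_comm // -!mulmxA.
Qed.

Lemma Sgt_Pj : S *m Pj = Pi *m S.
Proof.
by rewrite /S -mulmxA WPj mulmxA -(mulmxA U) dPj mulmxA complW_comm // -!mulmxA.
Qed.

Lemma eig_le_W : (E <= W)%MS.
Proof. exact: capmxSl. Qed.

Lemma eig_eq : (E :=: W *m Pi + S)%MS.
Proof.
have EW : E *m W = E := mulmx_idem_sub W_idem eig_le_W.
apply/eqmxP/andP; split.
  rewrite -[E]mulmx1 -PiPj mulmxDr; apply: addmx_sub.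
    by apply: submx_trans (addsmxSl _ _); rewrite -EW -mulmxA submxMl.
  apply: submx_trans (addsmxSr _ _); apply: submx_trans Wq_le_Sgt.
  rewrite sub_capmx -{1}EW -mulmxA WPj mulmxA submxMl /=.
  have /sub_kermxP : (E <= kermx (Pj *m W *m q))%MS := capmxSr _ _.
  by rewrite !mulmxA -(mulmxA E Pj W) -WPj mulmxA EW => /sub_kermxP.
rewrite addsmx_sub !sub_capmx WPi submxMl Sgt_le_W /=.
apply/andP; split; apply/sub_kermxP.
  by rewrite !mulmxA -(mulmxA Pi W Pj) WPj mulmxA Pi_Pj !mul0mx.
rewrite !mulmxA Sgt_Pj -(mulmxA Pi S W) (mulmx_idem_sub W_idem Sgt_le_W).
by rewrite -mulmxA Sgt_q mulmx0.
Qed.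

Lemma Sgt_le_eig : (S <= E)%MS.
Proof. by rewrite eig_eq addsmxSr. Qed.

Lemma eig_ker_q : (E :&: kermx q :=: S)%MS.
Proof.
apply/eqmxP/andP; split; first exact: submx_trans (capmxS eig_le_W _) Wq_le_Sgt.
by rewrite sub_capmx Sgt_le_eig; apply/sub_kermxP; exact: Sgt_q.
Qed.

Lemma rank_eig_q : (\rank (E *m q) + \rank (U *m Pj) = \rank (W *m Pi))%N.
Proof.
have cap_S : (W *m Pi :&: S :=: S *m Pi)%MS.
  apply/eqmxP/andP; split.
    have le_Pi : (W *m Pi :&: S <= Pi)%MS := submx_trans (capmxSl _ _) (submxMl W Pi).
    by rewrite -(mulmx_idem_sub Pi_idem le_Pi) submxMr ?capmxSr.
  rewrite sub_capmx -{1}(mulmx_idem_sub W_idem Sgt_le_W) -mulmxA submxMl.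
  by rewrite Sgt_Pi submxMl.
have SPi_rank : \rank (S *m Pi) = \rank (U *m Pj).
  rewrite Sgt_Pi /S -!mulmxA mulmxA -complW_comm // !mulmxA.
  exact: rank_complW_dW Pj_idem WPj dPi good_i good_j.
have := mxrank_mul_ker E q; have := mxrank_sum_cap (W *m Pi) S.
rewrite eig_ker_q -eig_eq cap_S SPi_rank; lia.
Qed.

Lemma Pi_Sgt : Pi *m S = U *m Pi *m d *m W.
Proof. by rewrite /S !mulmxA -complW_comm. Qed.

Lemma eig_dq_eq : (E *m M :=: Pi *m d *m W *m q)%MS.
Proof.
have UPi_dWq : U *m Pi *m d *m W *m q = 0 by rewrite -Pi_Sgt -mulmxA Sgt_q mulmx0.
have dWq_split : Pi *m d *m W *m q = W *m Pi *m d *m W *m q.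
  have Pi_split : Pi = W *m Pi + U *m Pi by rewrite -mulmxDl /U addrC subrK mul1mx.
  by rewrite {1}Pi_split -[RHS]addr0 -UPi_dWq -!mulmxDl.
apply/eqmxP/andP; split.
  rewrite (eqmxMr M eig_eq) addsmxMr Sgt_dq addsmx_sub sub0mx andbT /M !mulmxA.
  by rewrite -!(mulmxA W) submxMl.
by rewrite dWq_split /M -!(mulmxA (W *m Pi)) submxMr // eig_eq addsmxSl.
Qed.

Lemma rank_eig_dq : (\rank (E *m M) + \rank (U *m Pi) = \rank (Pi *m d))%N.
Proof.
have dWq_ker : (Pi *m d *m W :&: kermx q :=: U *m Pi *m d *m W)%MS.
  apply/eqmxP/andP; split; last first.
    rewrite sub_capmx -!mulmxA submxMl !mulmxA -Pi_Sgt.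
    by apply/sub_kermxP; rewrite -mulmxA Sgt_q mulmx0.
  set X := (Pi *m d *m W :&: kermx q)%MS.
  have X_le_S : (X <= S)%MS := submx_trans (capmxS (submxMl _ _) (submx_refl _)) Wq_le_Sgt.
  have XPj : X *m Pj = X.
    have /submxP[B ->] : (X <= Pi *m d *m W)%MS := capmxSl _ _.
    by rewrite -!mulmxA WPj (mulmxA d) dPj !mulmxA -(mulmxA B Pi Pi) Pi_idem.
  by rewrite -XPj -Pi_Sgt -Sgt_Pj submxMr.
have := mxrank_mul_ker (Pi *m d *m W) q.
rewrite eig_dq_eq dWq_ker (rank_complW_dW Pi_idem WPi dPj good_j good_i).
rewrite (rank_dW Pi_idem dPj good_j); lia.
Qed.

Lemma rank_eig_ker_dq :
  (\rank ((E :&: kermx M)%MS *m q) + \rank (E *m M) = \rank (E *m q))%N.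
Proof.
have Eq_le_kerM : (E :&: kermx q <= kermx M)%MS.
  by rewrite eig_ker_q; apply/sub_kermxP; exact: Sgt_dq.
have EMq_eq : ((E :&: kermx M) :&: kermx q :=: E :&: kermx q)%MS.
  apply/eqmxP/andP; split; first exact: capmxS (capmxSl _ _) (submx_refl _).
  by rewrite sub_capmx capmxSr andbT sub_capmx capmxSl Eq_le_kerM.
have := mxrank_mul_ker E q; have := mxrank_mul_ker E M.
have := mxrank_mul_ker (E :&: kermx M)%MS q; rewrite EMq_eq; lia.
Qed.

Lemma eigen_quotient_ranks :
  [/\ (\rank (E *m q) + \rank (U *m Pj) = \rank (W *m Pi))%N,
      (\rank (E *m M) + \rank (U *m Pi) = \rank (Pi *m d))%N &
      (\rank ((E :&: kermx M)%MS *m q) + \rank (E *m M) = \rank (E *m q))%N].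
Proof. by split; [exact: rank_eig_q | exact: rank_eig_dq | exact: rank_eig_ker_dq]. Qed.

End Eigen.
End QuotientRanks.

Lemma Wproj_block (F : fieldType) (n n' : nat) :
  Wproj F n n' = block_mx (pid_mx n') 0 0 (pid_mx n').
Proof.
apply/matrixP => i j; rewrite -(splitK i) -(splitK j).
case: (split i) => a; case: (split j) => b /=;
  rewrite ?block_mxEul ?block_mxEur ?block_mxEdl ?block_mxEdr !mxE /inV /= -val_eqE /=.
- rewrite (leqNgt n a) ltn_ord /= orbF.
  by case: (_ == _); rewrite /= ?mulr1n ?mulr0n.
- rewrite (_ : (a == n + b :> nat) = false) ?mulr0n //; apply/eqP; have := ltn_ord a; lia.
- rewrite (_ : (n + a == b :> nat) = false) ?mulr0n //; apply/eqP; have := ltn_ord b; lia.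
- rewrite eqn_add2l leq_addr ltn_add2l /= orb_idl; last by move=> h; lia.
  by case: (_ == _); rewrite /= ?mulr1n ?mulr0n.
Qed.

Definition Pplus (F : fieldType) n : 'M[F]_(n + n) := block_mx 1%:M 0 0 0.
Definition Pminus (F : fieldType) n : 'M[F]_(n + n) := block_mx 0 0 0 1%:M.

Ltac block_simpl := rewrite /Pplus /Pminus ?Wproj_block ?mulmx_block ?add_block_mx
  ?opp_block_mx ?mulmx0 ?mul0mx ?mulmx1 ?mul1mx ?addr0 ?add0r ?oppr0 ?subr0 ?sub0r
  ?mulNmx ?mulmxN.

Section Blocks.
Variables (F : fieldType) (n n' : nat).
Hypothesis n'_le_n : (n' <= n)%N.

Local Notation W := (Wproj F n n').
Local Notation Pp := (Pplus F n).
Local Notation Pm := (Pminus F n).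

Lemma Pplus_Pminus : Pp + Pm = 1%:M.
Proof. by block_simpl; rewrite -scalar_mx_block. Qed.

Lemma Pminus_Pplus : Pm + Pp = 1%:M.
Proof. by rewrite addrC Pplus_Pminus. Qed.

Lemma Pplus_idem : Pp *m Pp = Pp. Proof. by block_simpl. Qed.

Lemma Pminus_idem : Pm *m Pm = Pm. Proof. by block_simpl. Qed.

Lemma Wproj_idem : W *m W = W. Proof. by block_simpl; rewrite pid_mx_id. Qed.

Lemma Wproj_Pplus : W *m Pp = Pp *m W. Proof. by block_simpl. Qed.

Lemma Wproj_Pminus : W *m Pm = Pm *m W. Proof. by block_simpl. Qed.

Lemma parP_sub : parP F n = Pp - Pm.
Proof. by rewrite /parP; do 2 block_simpl. Qed.

Lemma rank_Wproj_Pplus : \rank (W *m Pp) = n'.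
Proof. by block_simpl; rewrite rank_diag_block_mx mxrank0 addn0 rank_pid_mx. Qed.

Lemma rank_Wproj_Pminus : \rank (W *m Pm) = n'.
Proof. by block_simpl; rewrite rank_diag_block_mx mxrank0 add0n rank_pid_mx. Qed.

Lemma rank_Vgt_Pplus : \rank ((1%:M - W) *m Pp) = (n - n')%N.
Proof.
rewrite (scalar_mx_block n n 1); do 3 block_simpl.
by rewrite rank_diag_block_mx mxrank0 addn0; exact: rank_copid_mx.
Qed.

Lemma rank_Vgt_Pminus : \rank ((1%:M - W) *m Pm) = (n - n')%N.
Proof.
rewrite (scalar_mx_block n n 1); do 3 block_simpl.
by rewrite rank_diag_block_mx mxrank0 add0n; exact: rank_copid_mx.
Qed.

End Blocks.

Section Boundary.
Variables (F : fieldType) (n : nat) (d : 'M[F]_(n + n)).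
Hypotheses (two_neq0 : (2%:R : F) != 0) (d_bd : is_boundary d).

Local Notation Pp := (Pplus F n).
Local Notation Pm := (Pminus F n).

Lemma boundary_block : d = block_mx 0 (dmp d) (dpm d) 0.
Proof.
case: d_bd => _; rewrite -[d]submxK /dmp /dpm block_mxKur block_mxKdl /parP.
do 3 block_simpl; rewrite -block_mx0 => /eq_block_mx[ul0 _ _ dr0].
have double0 (a : 'M[F]_n) : a + a = 0 -> a = 0.
  move=> aa0; have /eqP : 2%:R *: a = 0 by rewrite scaler_nat mulr2n.
  by rewrite scalemx_eq0 (negPf two_neq0) => /eqP.
rewrite (double0 _ ul0) (double0 (drsubmx d)) //.
by rewrite -[drsubmx d]opprK -opprD dr0 oppr0.
Qed.

Lemma boundary_Pplus : d *m Pp = Pm *m d.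
Proof. by rewrite boundary_block; do 3 block_simpl. Qed.

Lemma boundary_Pminus : d *m Pm = Pp *m d.
Proof. by rewrite boundary_block; do 3 block_simpl. Qed.

Lemma rank_Pplus_boundary : \rank (Pp *m d) = \rank (dmp d).
Proof.
rewrite [in LHS]boundary_block; do 3 block_simpl.
by rewrite block_mxEv row_mx0 rank_col_mx0 rank_row_0mx.
Qed.

Lemma rank_Pminus_boundary : \rank (Pm *m d) = \rank (dpm d).
Proof.
rewrite [in LHS]boundary_block; do 3 block_simpl.
by rewrite block_mxEv row_mx0 rank_col_0mx rank_row_mx0.
Qed.

End Boundary.

Lemma row_mul_pid_mx (F : fieldType) (n n' : nat) (x : 'rV[F]_n) (a : 'I_n) :
  (x *m pid_mx n') 0 a = if (a < n')%N then x 0 a else 0.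
Proof.
rewrite mxE (bigD1 a) //= big1 ?addr0 => [|j ja]; rewrite !mxE.
  by rewrite eqxx /=; case: ifP; rewrite ?mulr1 ?mulr0.
by rewrite val_eqE (negPf ja) /= mulr0.
Qed.

Section Goodness.
Variables (F : fieldType) (n n' : nat) (d : 'M[F]_(n + n)).
Hypothesis d_good : good n' d.

Lemma good_Pplus : ker_faithful (Wproj F n n') d (Pplus F n).
Proof.
case: d_good => good_plus _ x xd xP xW; apply: good_plus => // i.
rewrite -[x]hsubmxK in xP xW *.
move: xP; block_simpl; rewrite mul_row_block; do 3 block_simpl; move=> /eq_row_mx[_ x20].
move: xW; block_simpl; rewrite mul_row_block; do 3 block_simpl.
rewrite -row_mx0 => /eq_row_mx[x1W _].
rewrite -(splitK i); case: (split i) => a /=; rewrite ?row_mxEl ?row_mxEr.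
- have := row_mul_pid_mx n' (lsubmx x) a; rewrite x1W mxE.
  case: (ltnP a n') => [_ <-|n'_le_a _]; first by rewrite eqxx.
  by rewrite ltn_ord.
- by rewrite -x20 mxE eqxx.
Qed.

Lemma good_Pminus : ker_faithful (Wproj F n n') d (Pminus F n).
Proof.
case: d_good => _ good_minus x xd xP xW; apply: good_minus => // i.
rewrite -[x]hsubmxK in xP xW *.
move: xP; block_simpl; rewrite mul_row_block; do 3 block_simpl; move=> /eq_row_mx[x10 _].
move: xW; block_simpl; rewrite mul_row_block; do 3 block_simpl.
rewrite -row_mx0 => /eq_row_mx[_ x2W].
rewrite -(splitK i); case: (split i) => a /=; rewrite ?row_mxEl ?row_mxEr.
- by rewrite -x10 mxE eqxx.
- have := row_mul_pid_mx n' (rsubmx x) a; rewrite x2W mxE.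
  case: (ltnP a n') => [_ <-|n'_le_a _]; first by rewrite eqxx.
  by rewrite leq_add2l.
Qed.

End Goodness.

Section Quotient.
Variables (F : fieldType) (n n' k : nat) (q : 'M[F]_(n + n, k)).
Hypothesis two_neq0 : (2%:R : F) != 0.

Local Notation W := (Wproj F n n').

Lemma pre_eig_plus : (pre_eig n' 1 q :=: W :&: kermx (Pminus F n *m W *m q))%MS.
Proof.
rewrite /pre_eig.
have -> : Pprime n' q - 1 *: (W *m q) = - 2%:R *: (Pminus F n *m W *m q).
  rewrite /Pprime parP_sub scale1r -[W *m q]mul1mx -(Pplus_Pminus F n).
  rewrite !mulmxBl !mulmxDl !mulmxA.
  by apply/matrixP => i j; rewrite !mxE; ring.
by apply: cap_eqmx => //; apply: kermxZ; rewrite oppr_eq0.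
Qed.

Lemma pre_eig_minus : (pre_eig n' (-1) q :=: W :&: kermx (Pplus F n *m W *m q))%MS.
Proof.
rewrite /pre_eig.
have -> : Pprime n' q - (-1) *: (W *m q) = 2%:R *: (Pplus F n *m W *m q).
  rewrite /Pprime parP_sub scaleN1r -[W *m q]mul1mx -(Pplus_Pminus F n).
  rewrite !mulmxBl !mulmxDl !mulmxA.
  by apply/matrixP => i j; rewrite !mxE; ring.
exact: cap_eqmx (kermxZ _ two_neq0).
Qed.

End Quotient.

Section InducedRanks.
Variables (F : fieldType) (n n' k : nat) (d : 'M[F]_(n + n)) (q : 'M[F]_(n + n, k)).
Hypotheses (n'_le_n : (n' <= n)%N) (two_neq0 : (2%:R : F) != 0)
  (d_bd : is_boundary d) (d_good : good n' d) (q_quot : quot_pres n' d q).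

Let dd0 : d *m d = 0. Proof. by case: d_bd. Qed.

Lemma induced_ranks_plus :
  [/\ (\rank (Vq n' 1 q) + (n - n') = n')%N,
      (\rank (imq n' 1 d q) + (n - n') = \rank (dmp d))%N &
      (\rank (kerq n' 1 d q) + \rank (imq n' 1 d q) = \rank (Vq n' 1 q))%N].
Proof.
have [] := eigen_quotient_ranks (Wproj_idem F n'_le_n) dd0 q_quot
  (Pplus_Pminus F n) (Pplus_idem F n) (Pminus_idem F n)
  (Wproj_Pplus F n n') (Wproj_Pminus F n n')
  (boundary_Pplus two_neq0 d_bd) (boundary_Pminus two_neq0 d_bd)
  (good_Pplus d_good) (good_Pminus d_good).
have pre_eig_eq := pre_eig_plus n' q two_neq0.
rewrite /Vq /imq /kerq /dprime (eqmxMr q pre_eig_eq) (eqmxMr _ pre_eig_eq).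
rewrite (eqmxMr q (cap_eqmx pre_eig_eq (eqmx_refl _))).
rewrite rank_Wproj_Pplus // rank_Vgt_Pplus // rank_Vgt_Pminus //.
by rewrite (rank_Pplus_boundary two_neq0 d_bd).
Qed.

Lemma induced_ranks_minus :
  [/\ (\rank (Vq n' (-1) q) + (n - n') = n')%N,
      (\rank (imq n' (-1) d q) + (n - n') = \rank (dpm d))%N &
      (\rank (kerq n' (-1) d q) + \rank (imq n' (-1) d q) = \rank (Vq n' (-1) q))%N].
Proof.
have [] := eigen_quotient_ranks (Wproj_idem F n'_le_n) dd0 q_quot
  (Pminus_Pplus F n) (Pminus_idem F n) (Pplus_idem F n)
  (Wproj_Pminus F n n') (Wproj_Pplus F n n')
  (boundary_Pminus two_neq0 d_bd) (boundary_Pplus two_neq0 d_bd)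
  (good_Pminus d_good) (good_Pplus d_good).
have pre_eig_eq := pre_eig_minus n' q two_neq0.
rewrite /Vq /imq /kerq /dprime (eqmxMr q pre_eig_eq) (eqmxMr _ pre_eig_eq).
rewrite (eqmxMr q (cap_eqmx pre_eig_eq (eqmx_refl _))).
rewrite rank_Wproj_Pminus // rank_Vgt_Pplus // rank_Vgt_Pminus //.
by rewrite (rank_Pminus_boundary two_neq0 d_bd).
Qed.

End InducedRanks.

Lemma Fp_two_neq0 (p : nat) : prime p -> odd p -> (2%:R : 'F_p) != 0.
Proof.
move=> p_pr p_odd; rewrite -(dvdn_pcharf (pchar_Fp p_pr)).
apply/negP => /(@dvdn_leq _ 2 isT); have := prime_gt1 p_pr.
by case: p {p_pr} p_odd => [|[|[|p]]].
Qed.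

Theorem lemma3 (D : nat) (HD : prime D) (Hodd : odd D) (n n' : nat)
  (Hn : (n' <= n)%N) (d : 'M['F_D]_(n + n))
  (Hb : is_boundary d) (Hg : good n' d)
  (k : nat) (q : 'M['F_D]_(n + n, k)) (Hq : quot_pres n' d q) :
  (\rank (Vq n' 1 q) + n = 2 * n')%N /\
  (\rank (Vq n' (-1) q) + n = 2 * n')%N /\
  (\rank (kerq n' 1 d q) + (n - n') = \rank (kermx (dmp d)))%N /\
  (\rank (imq n' 1 d q) + (n - n') = \rank (dmp d))%N /\
  (\rank (kerq n' (-1) d q) + (n - n') = \rank (kermx (dpm d)))%N /\
  (\rank (imq n' (-1) d q) + (n - n') = \rank (dpm d))%N.
Proof.
have two_neq0 := Fp_two_neq0 HD Hodd.
have [Vp imp kerp] := induced_ranks_plus Hn two_neq0 Hb Hg Hq.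
have [Vm imm kerm] := induced_ranks_minus Hn two_neq0 Hb Hg Hq.
rewrite !mxrank_ker; have := rank_leq_col (dmp d); have := rank_leq_col (dpm d).
lia.
Qed.
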